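(* Let $q$ be a prime power and let $n, r, d$ be integers with $1 \le d \le r \le n/2$. Let $\mathcal{E}^0 \subseteq E_r(q,n)$ be the lifting $\{I({\bf C}) : {\bf C} \in \mathcal{M}\}$ of an MRD code $\mathcal{M} \subseteq \mathrm{GF}(q)^{r \times (n-r)}$ with minimum rank distance $d$ and cardinality $q^{(n-r)(r-d+1)}$. For $1 \le k \le \lfloor r/d \rfloor$ let: - $\mathcal{C}^k \subseteq \mathrm{GF}(q)^{(r-kd)\times kd}$ be an MRD code with minimum rank distance $d$ if $k \le \lfloor r/d\rfloor - 1$, and $\mathcal{C}^{\lfloor r/d \rfloor} = \{{\bf 0}\} \subseteq \mathrm{GF}(q)^{(r - \lfloor r/d\rfloor d)\times \lfloor r/d \rfloor d}$; - $\mathcal{D}^k \subseteq \mathrm{GF}(q)^{r \times (n-r-kd)}$ be an MRD code with minimum rank distance $d$ if $k \le \lfloor (n-r)/d \rfloor - 1$, and $\mathcal{D}^{\lfloor (n-r)/d\rfloor} = \{{\bf 0}\}\subseteq \mathrm{GF}(q)^{r \times (n-r-\lfloor (n-r)/d\rfloor d)}$ (when $\lfloor (n-r)/d\rfloor = \lfloor r/d \rfloor$, this is the case $k = \lfloor r/d\rfloor$). For ${\bf C} \in \mathcal{C}^k$ and ${\bf D} \in \mathcal{D}^k$, write ${\bf D} = \begin{pmatrix} {\bf D}' \\ {\bf D}''\end{pmatrix}$ with ${\bf D}'$ consisting of the first $r-kd$ rows and ${\bf D}''$ of the last $kd$ rows, and let $E^k_{{\bf C},{\bf D}} \in E_r(q,n)$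 be the row space of the $r\times n$ matrix $$\begin{pmatrix} {\bf I}_{r-kd} & {\bf C} & {\bf 0}_{(r-kd)\times kd} & {\bf D}' \\ {\bf 0}_{kd \times (r-kd)} & {\bf 0}_{kd\times kd} & {\bf I}_{kd} & {\bf D}'' \end{pmatrix}.$$ Let $\mathcal{E}^k = \{E^k_{{\bf C},{\bf D}} : {\bf C} \in \mathcal{C}^k, {\bf D}\in \mathcal{D}^k\}$ and $\mathcal{E} = \bigcup_{k=0}^{\lfloor r/d\rfloor} \mathcal{E}^k$. Then $\mathcal{E}$ has minimum injection distance $d$, i.e. the minimum of $d_{\mathrm{I}}(U,V)$ over distinct $U,V \in \mathcal{E}$ equals $d$.
   Context: $E_r(q,n)$ is the set of $r$-dimensional subspaces of $\mathrm{GF}(q)^n$. For a matrix ${\bf M}$, $R({\bf M})$ is its row space; for ${\bf C} \in \mathrm{GF}(q)^{r\times(n-r)}$ the lifting is $I({\bf C}) = R({\bf I}_r \mid {\bf C}) \in E_r(q,n)$. The injection distance is $d_{\mathrm{I}}(U,V) = \dim(U+V) - \min\{\dim U,\dim V\}$. The rank distance between matrices is $d_{\mathrm{R}}({\bf C},{\bf D}) = \mathrm{rk}({\bf C}-{\bf D})$. An MRD code in $\mathrm{GF}(q)^{m\times N}$ with minimum rank distance $d$ is a set of matrices with minimum rank distance $d$ and the maximum possible cardinality $\min\{q^{m(N-d+1)}, q^{N(m-d+1)}\}$. *)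

From mathcomp Require Import all_boot all_order all_algebra.
Set Implicit Arguments. Unset Strict Implicit. Unset Printing Implicit Defensive.
Import GRing.Theory.
Local Open Scope ring_scope.

Section Subspaces.
Variable F : fieldType.

(* entry of a matrix at natural-number indices (0 outside the range) *)
Definition mxat m N (A : 'M[F]_(m, N)) (i j : nat) : F :=
  odflt 0 (obind (fun i' : 'I_m => omap (fun j' : 'I_N => A i' j') (insub j))
                 (insub i)).

(* subspaces of F^n are represented by their canonical row-space matrix
   <<A>>%MS : 'M_n ; the row space R(A) of A : 'M_(m,n) is <<A>>%MS *)
Definition rowsp m n (A : 'M[F]_(m, n)) : 'M[F]_n := <<A>>%MS.

Definition inj_dist n (U V : 'M[F]_n) : nat :=
  (\rank (U + V)%MS - minn (\rank U) (\rank V))%N.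

Definition rank_dist m N (A B : 'M[F]_(m, N)) : nat := \rank (A - B).

(* lifting I(C) = R(I_r | C) for C : r x (n-r) *)
Definition lift_mx r n (C : 'M[F]_(r, n - r)) : 'M[F]_(r, n) :=
  \matrix_(i < r, j < n)
    if (j < r)%N then (i == j :> nat)%:R else mxat C i (j - r).

(* generator matrix
   ( I_{r-kd}  C   0        D'  )
   ( 0         0   I_{kd}   D'' )  of size r x n *)
Definition Ek_mx r n d k (C : 'M[F]_(r - k * d, k * d))
    (D : 'M[F]_(r, n - r - k * d)) : 'M[F]_(r, n) :=
  \matrix_(i < r, j < n)
    let a := (r - k * d)%N in
    if (i < a)%N then
      (if (j < a)%N then (i == j :> nat)%:R
       else if (j < r)%N then mxat C i (j - a)
       else if (j < r + k * d)%N then 0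
       else mxat D i (j - r - k * d))
    else
      (if (j < r)%N then 0
       else if (j < r + k * d)%N then ((i - a)%N == (j - r)%N)%:R
       else mxat D i (j - r - k * d)).

End Subspaces.

Section Codes.
Variable F : finFieldType.

Definition min_rank_dist m N (S : {set 'M[F]_(m, N)}) (d : nat) : Prop :=
  (forall A B, A \in S -> B \in S -> A != B -> (d <= rank_dist A B)%N) /\
  (exists A B, [/\ A \in S, B \in S, A != B & rank_dist A B = d]).

Definition MRD m N (S : {set 'M[F]_(m, N)}) (d : nat) : Prop :=
  min_rank_dist S d /\
  #|S| = minn (#|F| ^ (m * (N - d + 1))) (#|F| ^ (N * (m - d + 1))).

Definition in_E r n d (M : {set 'M[F]_(r, n - r)})
    (C : forall k, {set 'M[F]_(r - k * d, k * d)})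
    (D : forall k, {set 'M[F]_(r, n - r - k * d)}) (U : 'M[F]_n) : Prop :=
  (exists2 X, X \in M & U = rowsp (lift_mx X)) \/
  (exists k, [/\ (1 <= k)%N, (k <= r %/ d)%N &
     exists X Y, [/\ X \in C k, Y \in D k & U = rowsp (Ek_mx X Y)]]).

End Codes.

From mathcomp Require Import all_boot all_order all_algebra.
From mathcomp Require Import zify.
Set Implicit Arguments. Unset Strict Implicit. Unset Printing Implicit Defensive.
Import GRing.Theory.
Local Open Scope ring_scope.

(* A subspace of level k (k = 0 for the lifting of M) has a generator matrix
   with an identity on r pivot columns, the first r - kd of them being the
   first columns, and only r - kd nonzero rows within the first r columns.
   Two generators with the same pivot columns span subspaces at injection
   distance rank (G1 - G2), which dominates the rank distance of their C- or
   D-blocks; so distinct subspaces of equal level are at distance >= d.  For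
   levels k1 < k2, G2 has rank at most r - k2 d on the first r - k1 d pivot
   columns of G1, so the row spaces meet in dimension at most r - (k2 - k1) d.
   Lifting is an isometry, so two codewords of M at rank distance d give two
   subspaces at injection distance d. *)

Section InjectionDistance.
Variable F : fieldType.

Lemma rank_colsub m n p (g : 'I_p -> 'I_n) (A : 'M[F]_(m, n)) :
  (\rank (colsub g A) <= \rank A)%N.
Proof. by rewrite -[A in colsub _ A]mulmx1 -mulmx_colsub; apply: mxrankM_maxl. Qed.

Lemma rank_rowsub m n p (f : 'I_p -> 'I_m) (A : 'M[F]_(m, n)) :
  (\rank (rowsub f A) <= \rank A)%N.
Proof. exact/mxrankS/rowsub_sub. Qed.

Lemma mulmx_pid_mxE m p a (A : 'M[F]_(m, p)) i j :
  (A *m pid_mx a) i j = A i j *+ (j < a)%N.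
Proof.
rewrite !mxE (bigD1 j) //= big1 ?addr0 => [|k nkj].
  by rewrite mxE eqxx mulr_natr.
by move: nkj; rewrite mxE -val_eqE => /negPf ->; rewrite mulr0.
Qed.

Lemma rank_le_zero_rows m n a (A : 'M[F]_(m, n)) :
  (forall (i : 'I_m) (j : 'I_n), (a <= i)%N -> A i j = 0) -> (\rank A <= a)%N.
Proof.
move=> A0; have [le_ma|lt_am] := leqP m a; first exact: leq_trans (rank_leq_row A) _.
have -> : A = (A^T *m pid_mx a)^T.
  apply/matrixP => i j; rewrite [RHS]mxE mulmx_pid_mxE mxE.
  by case: (ltnP i a) => [_|/A0 ->]; rewrite ?mulr1n ?mul0rn.
rewrite mxrank_tr; apply: leq_trans (mxrankM_maxr _ _) _.
by rewrite rank_pid_mx // ltnW.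
Qed.

Lemma inj_distC n (U V : 'M[F]_n) : inj_dist U V = inj_dist V U.
Proof. by rewrite /inj_dist minnC addsmxC. Qed.

Lemma inj_dist_row_free r n (G1 G2 : 'M[F]_(r, n)) :
  row_free G1 -> row_free G2 ->
  inj_dist (rowsp G1) (rowsp G2) = (r - \rank (rowsp G1 :&: rowsp G2))%N.
Proof.
rewrite /row_free /inj_dist /rowsp => /eqP rk1 /eqP rk2.
have := mxrank_sum_cap <<G1>>%MS <<G2>>%MS; rewrite !genmxE rk1 rk2 minnn.
have : (\rank (<<G1>> :&: <<G2>>)%MS <= r)%N.
  by rewrite -[X in (_ <= X)%N]rk1 -(genmxE G1) mxrankS ?capmxSl.
lia.
Qed.

(* The kernel of [G1 - G2] is mapped onto the intersection by [u |-> u *m G1],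
   injectively since [G1] is row free. *)
Lemma inj_dist_systematic r n (G1 G2 : 'M[F]_(r, n)) (P : 'M_(n, r)) :
  G1 *m P = 1%:M -> G2 *m P = 1%:M ->
  inj_dist (rowsp G1) (rowsp G2) = \rank (G1 - G2).
Proof.
move=> G1P G2P.
have G1free : row_free G1 by apply/row_freeP; exists P.
have G2free : row_free G2 by apply/row_freeP; exists P.
rewrite inj_dist_row_free // /rowsp; set W := (<<G1>> :&: <<G2>>)%MS.
have WG1 : (W <= G1)%MS by apply: submx_trans (capmxSl _ _) _; rewrite genmxE.
have WG2 : (W <= G2)%MS by apply: submx_trans (capmxSr _ _) _; rewrite genmxE.
have WPG1 : W *m P *m G1 = W.
  by case/submxP: WG1 => Z ->; rewrite -(mulmxA Z) G1P mulmx1.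
have WPG2 : W *m P *m G2 = W.
  by case/submxP: WG2 => Z ->; rewrite -(mulmxA Z) G2P mulmx1.
have le_W : (\rank W <= r - \rank (G1 - G2)%R)%N.
  rewrite -mxrank_ker -{1}WPG1; apply: leq_trans (mxrankM_maxl _ _) _.
  by apply/mxrankS/sub_kermxP; rewrite mulmxBr WPG1 WPG2 subrr.
have ge_W : (r - \rank (G1 - G2)%R <= \rank W)%N.
  rewrite -mxrank_ker -(mxrankMfree _ G1free); apply: mxrankS.
  rewrite sub_capmx !genmxE submxMl /=.
  have -> : kermx (G1 - G2) *m G1 = kermx (G1 - G2) *m G2.
    by apply/eqP; rewrite -subr_eq0 -mulmxBr mulmx_ker.
  exact: submxMl.
have := rank_leq_row (G1 - G2); lia.
Qed.

(* On the first [a] columns of [P] the rows of [G1] are independent while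
   those of [G2] span at most [b] dimensions. *)
Lemma inj_dist_ge_rank_drop r n (G1 G2 : 'M[F]_(r, n)) (P : 'M_(n, r)) a b :
  G1 *m P = 1%:M -> row_free G2 -> (a <= r)%N ->
  (\rank (G2 *m P *m (pid_mx a : 'M_r)) <= b)%N ->
  (a - b <= inj_dist (rowsp G1) (rowsp G2))%N.
Proof.
move=> G1P G2free le_ar rkG2P.
have G1free : row_free G1 by apply/row_freeP; exists P.
rewrite inj_dist_row_free // /rowsp; set W := (<<G1>> :&: <<G2>>)%MS.
have WG1 : (W <= G1)%MS by apply: submx_trans (capmxSl _ _) _; rewrite genmxE.
have WG2 : (W <= G2)%MS by apply: submx_trans (capmxSr _ _) _; rewrite genmxE.
have WPG1 : W *m P *m G1 = W.
  by case/submxP: WG1 => Z ->; rewrite -(mulmxA Z) G1P mulmx1.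
have splitWP : W *m P = W *m P *m pid_mx a + W *m P *m copid_mx a.
  by rewrite -mulmxDr /copid_mx addrC subrK mulmx1.
have : (\rank W <= b + (r - a))%N.
  rewrite -{1}WPG1; apply: leq_trans (mxrankM_maxl _ _) _.
  rewrite splitWP; apply: leq_trans (mxrank_add _ _) _; apply: leq_add.
    by apply: leq_trans rkG2P; apply/mxrankS/submxMr/submxMr.
  by apply: leq_trans (mxrankM_maxr _ _) _; rewrite rank_copid_mx.
lia.
Qed.

End InjectionDistance.

Section Systematic.
Variables (F : fieldType) (n r : nat).
Hypothesis hrn : (r + r <= n)%N.

Lemma mxatE m N (A : 'M[F]_(m, N)) (i : 'I_m) (j : 'I_N) : mxat A i j = A i j.
Proof. by rewrite /mxat !valK. Qed.

Fact pivot_subproof a (l : 'I_r) : ((if l < a then l : nat else l - a + r) < n)%N.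
Proof. by have := ltn_ord l; case: ifP; lia. Qed.

(* For [a = r - k * d], [pivot a] enumerates the columns of the two identity
   blocks of [Ek_mx]; [pivot r] enumerates the first [r] columns. *)
Definition pivot a (l : 'I_r) : 'I_n := Ordinal (pivot_subproof a l).

Definition pivot_mx a : 'M[F]_(n, r) := colsub (pivot a) 1%:M.

(* [G] has the shape of the generator matrices of [E^k] (for [k = 0], of the
   lifted code). *)
Definition level d k (G : 'M[F]_(r, n)) : Prop :=
  G *m pivot_mx (r - k * d) = 1%:M /\
  forall (i : 'I_r) (j : 'I_n), (r - k * d <= i)%N -> (j < r)%N -> G i j = 0.

Lemma lift_mx_level d (X : 'M[F]_(r, n - r)) : level d 0 (lift_mx X).
Proof.
rewrite /level mul0n subn0; split=> [|i j]; last by have := ltn_ord i; lia.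
by apply/matrixP => i j; rewrite mulmx_colsub mulmx1 !mxE /= !ltn_ord.
Qed.

Lemma Ek_mx_level d k (X : 'M[F]_(r - k * d, k * d)) (Y : 'M[F]_(r, n - r - k * d)) :
  (k * d <= r)%N -> level d k (Ek_mx X Y).
Proof.
move=> le_kd; split=> [|i j le_i lt_j]; last by rewrite !mxE lt_j /= ltnNge le_i.
apply/matrixP => i j; rewrite mulmx_colsub mulmx1 !mxE /=.
rewrite -val_eqE /=; have := ltn_ord i; have := ltn_ord j => lt_jr lt_ir.
have [lt_ja|le_aj] := ltnP j (r - k * d);
  by repeat (first [case: ifP | case: eqP]; move=> ?); try lia.
Qed.

Lemma rank_lift_mxB (X1 X2 : 'M[F]_(r, n - r)) :
  \rank (lift_mx X1 - lift_mx X2) = \rank (X1 - X2).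
Proof.
have le_rn : (r + (n - r) <= n)%N by lia.
pose S : 'M[F]_(n - r, n) := \matrix_(j < n - r, l < n) (l == (j + r)%N :> nat)%:R.
have Sfree : row_free S.
  apply/row_freeP; exists (colsub (fun j => widen_ord le_rn (rshift r j)) 1%:M).
  by apply/matrixP => j l; rewrite mulmx_colsub mulmx1 !mxE /= addnC eqn_add2r eq_sym.
suff -> : lift_mx X1 - lift_mx X2 = (X1 - X2) *m S by rewrite mxrankMfree.
apply/matrixP => i l; rewrite !mxE; have [lt_lr|le_rl] := ltnP l r.
  rewrite subrr big1 // => j _; rewrite !mxE.
  by rewrite (_ : (l == (j + r)%N :> nat) = false) ?mulr0 //; apply/negbTE; lia.
have lt_lr' : (l - r < n - r)%N by have := ltn_ord l; lia.
rewrite (bigD1 (Ordinal lt_lr')) //= big1 ?addr0 => [|j ne_j].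
  by rewrite !mxE /= subnK // eqxx mulr1 -!(mxatE _ i (Ordinal lt_lr')).
rewrite !mxE (_ : (l == (j + r)%N :> nat) = false) ?mulr0 //; apply/negbTE.
by move: ne_j; rewrite -val_eqE /=; lia.
Qed.

Lemma rank_Ek_mxB_ge_C d k (X1 X2 : 'M[F]_(r - k * d, k * d))
    (Y1 Y2 : 'M[F]_(r, n - r - k * d)) :
  (k * d <= r)%N -> (\rank (X1 - X2)%R <= \rank (Ek_mx X1 Y1 - Ek_mx X2 Y2)%R)%N.
Proof.
move=> le_kd; have le_ar := leq_subr (k * d) r.
have le_n : (r - k * d + k * d <= n)%N by lia.
suff -> : X1 - X2 = rowsub (widen_ord le_ar)
    (colsub (fun j => widen_ord le_n (rshift _ j)) (Ek_mx X1 Y1 - Ek_mx X2 Y2)).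
  exact: leq_trans (rank_rowsub _ _) (rank_colsub _ _).
apply/matrixP => i j; rewrite !mxE /= ltn_ord.
have lt_j := ltn_ord j.
have -> : (r - k * d + j < r - k * d)%N = false by lia.
have -> : (r - k * d + j < r)%N by lia.
by rewrite addKn !mxatE.
Qed.

Lemma rank_Ek_mxB_ge_D d k (X1 X2 : 'M[F]_(r - k * d, k * d))
    (Y1 Y2 : 'M[F]_(r, n - r - k * d)) :
  (k * d <= r)%N -> (\rank (Y1 - Y2)%R <= \rank (Ek_mx X1 Y1 - Ek_mx X2 Y2)%R)%N.
Proof.
move=> le_kd; have le_n : (r + k * d + (n - r - k * d) <= n)%N by lia.
suff -> : Y1 - Y2 =
    colsub (fun j => widen_ord le_n (rshift _ j)) (Ek_mx X1 Y1 - Ek_mx X2 Y2).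
  exact: rank_colsub.
apply/matrixP => i j; rewrite !mxE /=.
have -> : (r + k * d + j - r - k * d)%N = j by lia.
have -> : (r + k * d + j < r - k * d)%N = false by lia.
have -> : (r + k * d + j < r)%N = false by lia.
have -> : (r + k * d + j < r + k * d)%N = false by lia.
by rewrite !mxatE; case: ifP.
Qed.

Lemma inj_dist_ge_level_gap d k1 k2 (G1 G2 : 'M[F]_(r, n)) :
  (k1 < k2)%N -> (k2 * d <= r)%N -> level d k1 G1 -> level d k2 G2 ->
  (d <= inj_dist (rowsp G1) (rowsp G2))%N.
Proof.
move=> lt_k12 le_k2d [G1P _] [G2P G2_0].
have G2free : row_free G2 by apply/row_freeP; exists (pivot_mx (r - k2 * d)).
have le_gap : (k1.+1 * d <= k2 * d)%N by rewrite leq_mul2r lt_k12 orbT.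
rewrite mulSn in le_gap.
have rank_drop := inj_dist_ge_rank_drop (a := r - k1 * d) (b := r - k2 * d)
  G1P G2free (leq_subr _ _).
apply: leq_trans (rank_drop _); first lia.
apply: rank_le_zero_rows => i j le_i; rewrite mulmx_pid_mxE mulmx_colsub mulmx1 mxE.
have [lt_ja|_] := ltnP j (r - k1 * d); last by rewrite mulr0n.
by rewrite G2_0 ?mul0rn //= lt_ja.
Qed.
End Systematic.

Lemma leq_mul_of_leq_div k d m : (k <= m %/ d)%N -> (k * d <= m)%N.
Proof. by move=> le_k; apply: leq_trans (leq_divM m d); rewrite leq_mul2r le_k orbT. Qed.

Lemma rank_dist_ge_family (F : finFieldType) (m N : nat -> nat)
    (S : forall k, {set 'M[F]_(m k, N k)}) d K k (A B : 'M[F]_(m k, N k)) :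
  (forall k, (1 <= k)%N -> (k < K)%N -> MRD (S k) d) -> S K = [set 0] ->
  (1 <= k)%N -> (k <= K)%N -> A \in S k -> B \in S k -> A != B ->
  (d <= rank_dist A B)%N.
Proof.
move=> hS hSK k_gt0 le_kK; have [lt_kK|le_Kk] := ltnP k K.
  by case: (hS k k_gt0 lt_kK) => -[min_dist _] _; apply: min_dist.
have eqKk : K = k by lia.
by subst K; rewrite hSK !inE => /eqP-> /eqP->; rewrite eqxx.
Qed.

Section Construction.
Variables (F : finFieldType) (n r d : nat).
Hypothesis hrn : (r + r <= n)%N.
Variable M : {set 'M[F]_(r, n - r)}.
Variable C : forall k, {set 'M[F]_(r - k * d, k * d)}.
Variable D : forall k, {set 'M[F]_(r, n - r - k * d)}.
Hypothesis hM : MRD M d.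
Hypothesis hC : forall k, (1 <= k)%N -> (k < r %/ d)%N -> MRD (C k) d.
Hypothesis hC0 : C (r %/ d) = [set 0].
Hypothesis hD : forall k, (1 <= k)%N -> (k < (n - r) %/ d)%N -> MRD (D k) d.
Hypothesis hD0 : D ((n - r) %/ d) = [set 0].

Lemma inj_dist_lift (X Y : 'M[F]_(r, n - r)) :
  inj_dist (rowsp (lift_mx X)) (rowsp (lift_mx Y)) = rank_dist X Y.
Proof.
have [XP _] := lift_mx_level hrn d X; have [YP _] := lift_mx_level hrn d Y.
by rewrite (inj_dist_systematic XP YP) rank_lift_mxB.
Qed.

Lemma inj_dist_ge_levels k1 k2 (G1 G2 : 'M[F]_(r, n)) :
  k1 != k2 -> (k1 <= r %/ d)%N -> (k2 <= r %/ d)%N ->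
  level hrn d k1 G1 -> level hrn d k2 G2 ->
  (d <= inj_dist (rowsp G1) (rowsp G2))%N.
Proof.
case: (ltngtP k1 k2) => // [lt_k12|lt_k21] _ le_k1 le_k2 G1k1 G2k2.
  exact: inj_dist_ge_level_gap lt_k12 (leq_mul_of_leq_div le_k2) G1k1 G2k2.
rewrite inj_distC.
exact: inj_dist_ge_level_gap lt_k21 (leq_mul_of_leq_div le_k1) G2k2 G1k1.
Qed.

Lemma inj_dist_ge_same_level k (X1 X2 : 'M[F]_(r - k * d, k * d))
    (Y1 Y2 : 'M[F]_(r, n - r - k * d)) :
  (1 <= k)%N -> (k <= r %/ d)%N ->
  X1 \in C k -> X2 \in C k -> Y1 \in D k -> Y2 \in D k ->
  rowsp (Ek_mx X1 Y1) != rowsp (Ek_mx X2 Y2) ->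
  (d <= inj_dist (rowsp (Ek_mx X1 Y1)) (rowsp (Ek_mx X2 Y2)))%N.
Proof.
move=> k_gt0 le_k hX1 hX2 hY1 hY2 neE.
have le_kd := leq_mul_of_leq_div le_k.
have [E1P _] := Ek_mx_level hrn X1 Y1 le_kd.
have [E2P _] := Ek_mx_level hrn X2 Y2 le_kd.
rewrite (inj_dist_systematic E1P E2P); have [eqX|neX] := eqVneq X1 X2.
  have neY : Y1 != Y2 by apply: contraNneq neE => eqY; rewrite eqX eqY.
  apply: leq_trans (rank_Ek_mxB_ge_D hrn X1 X2 Y1 Y2 le_kd).
  apply: (rank_dist_ge_family hD hD0) => //.
  by apply: leq_trans le_k _; apply: leq_div2r; lia.
apply: leq_trans (rank_Ek_mxB_ge_C hrn X1 X2 Y1 Y2 le_kd).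
exact: (rank_dist_ge_family hC hC0).
Qed.

Lemma inj_dist_in_E_ge U V :
  in_E M C D U -> in_E M C D V -> U != V -> (d <= inj_dist U V)%N.
Proof.
case=> [[X hX ->]|[k1 [k1_gt0 le_k1 [X1 [Y1 [hX1 hY1 ->]]]]]];
case=> [[Y hY ->]|[k2 [k2_gt0 le_k2 [X2 [Y2 [hX2 hY2 ->]]]]]] neUV.
- rewrite inj_dist_lift; case: hM => -[min_dist _] _; apply: min_dist => //.
  by apply: contraNneq neUV => ->.
- apply: (inj_dist_ge_levels (k1 := 0) (k2 := k2)) => //.
  + by rewrite eq_sym -lt0n.
  + exact: lift_mx_level.
  + exact/Ek_mx_level/leq_mul_of_leq_div.
- apply: (inj_dist_ge_levels (k1 := k1) (k2 := 0)) => //.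
  + by rewrite -lt0n.
  + exact/Ek_mx_level/leq_mul_of_leq_div.
  + exact: lift_mx_level.
have [eqk|nek] := eqVneq k1 k2; first by subst k2; exact: inj_dist_ge_same_level.
by apply: (inj_dist_ge_levels nek) => //; apply/Ek_mx_level/leq_mul_of_leq_div.
Qed.

Lemma inj_dist_in_E_attained :
  exists U V, [/\ in_E M C D U, in_E M C D V, U != V & inj_dist U V = d].
Proof.
case: hM => -[_ [A [B [hA hB neAB dAB]]]] _.
exists (rowsp (lift_mx A)), (rowsp (lift_mx B)); split.
- by left; exists A.
- by left; exists B.
- apply: contraNneq neAB => eqAB; rewrite -subr_eq0 -mxrank_eq0.
  by have := inj_dist_lift A B; rewrite eqAB inj_dist_lift /rank_dist subrr mxrank0 => <-.
- by rewrite inj_dist_lift.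
Qed.

End Construction.

Theorem proposition1 (F : finFieldType) (n r d : nat)
  (hd1 : (1 <= d)%N) (hdr : (d <= r)%N) (hrn : (2 * r <= n)%N)
  (M : {set 'M[F]_(r, n - r)})
  (hM : MRD M d) (hMcard : #|M| = (#|F| ^ ((n - r) * (r - d + 1)))%N)
  (C : forall k, {set 'M[F]_(r - k * d, k * d)})
  (hC : forall k, (1 <= k)%N -> (k < r %/ d)%N -> MRD (C k) d)
  (hC0 : C (r %/ d)%N = [set 0%R])
  (D : forall k, {set 'M[F]_(r, n - r - k * d)})
  (hD : forall k, (1 <= k)%N -> (k < (n - r) %/ d)%N -> MRD (D k) d)
  (hD0 : D ((n - r) %/ d)%N = [set 0%R]) :
  (forall U V, in_E M C D U -> in_E M C D V -> U != V ->
     (d <= inj_dist U V)%N) /\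
  (exists U V, [/\ in_E M C D U, in_E M C D V, U != V & inj_dist U V = d]).
Proof.
have hrr : (r + r <= n)%N by lia.
split; first exact: (inj_dist_in_E_ge hrr hM hC hC0 hD hD0).
exact: (inj_dist_in_E_attained hrr C D hM).
Qed.
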